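(* Let $\mathcal{A}=\{H_1,\dots,H_n\}$ be an arrangement of distinct lines in $\mathbb{P}^2_{\mathbb{C}}$ and let $\mathcal{A}_t=\{H_1,\dots,H_t\}$ for $t=1,\dots,n$. If $|H_t\cap\operatorname{mult}(\mathcal{A}_t)|\le 2$ for all $t=1,\dots,n$, then $\mathcal{R}(I(\mathcal{A}))$ is irreducible.
   Context: Lines $H_i=\{a_ix+b_iy+c_iz=0\}$ are identified with points $(a_i:b_i:c_i)\in(\mathbb{P}^2)^*$; $\det(H_i,H_j,H_k)$ is the determinant of the matrix of their coefficient rows. The incidence is $I(\mathcal{A})=\{\{i,j,k\}: i,j,k \text{ distinct},\ H_i\cap H_j\cap H_k\ne\emptyset\}$. For a set $I$ of 3-subsets of $\{1,\dots,n\}$, $\mathcal{R}(I)=\{(H_1,\dots,H_n)\in((\mathbb{P}^2)^* )^n: H_i\ne H_j\ (i\ne j),\ \det(H_i,H_j,H_k)=0 \text{ iff } \{i,j,k\}\in I\}$, with the Zariski topology. $\operatorname{mult}(\mathcal{A})$ is the set of points lying on at least three lines of $\mathcal{A}$. *)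

From HB Require Import structures.
From mathcomp Require Import all_boot all_order all_algebra.
Set Implicit Arguments. Unset Strict Implicit. Unset Printing Implicit Defensive.
Import Order.TTheory GRing.Theory Num.Theory.
Local Open Scope ring_scope.

Section Defs.
Variable C : numClosedFieldType.

(* A point of P^2 or of (P^2)^* is represented by a nonzero row vector of C^3. *)
Definition dot (a b : 'rV[C]_3) : C := \sum_(j < 3) a 0 j * b 0 j.

Definition same_point (a b : 'rV[C]_3) : Prop :=
  a != 0 /\ b != 0 /\ exists l : C, b = l *: a.

Definition det3 (a b c : 'rV[C]_3) : C :=
  \det (\matrix_(r < 3, s < 3) (nth 0 [:: a; b; c] r) 0 s).

Variable n : nat.

Definition incidence (H : 'I_n -> 'rV[C]_3) (S : {set 'I_n}) : Prop :=
  #|S| = 3%N /\ exists p : 'rV[C]_3, p != 0 /\ forall i, i \in S -> dot (H i) p = 0.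

(* representatives of points of the realization space R(I) in ((P^2)^* )^n *)
Definition realization (I : {set 'I_n} -> Prop) (G : 'I_n -> 'rV[C]_3) : Prop :=
  (forall i, G i != 0) /\
  (forall i j, i != j -> ~ same_point (G i) (G j)) /\
  (forall i j k, i != j -> j != k -> i != k ->
     (det3 (G i) (G j) (G k) = 0 <-> I [set i; j; k])).

Inductive polyfun : ((('I_n -> 'rV[C]_3) -> C) -> Prop) :=
| pf_const (c : C) : polyfun (fun _ => c)
| pf_coord (i : 'I_n) (j : 'I_3) : polyfun (fun G => G i 0 j)
| pf_add f g : polyfun f -> polyfun g -> polyfun (fun G => f G + g G)
| pf_mul f g : polyfun f -> polyfun g -> polyfun (fun G => f G * g G).

(* Zariski-closed subsets of ((P^2)^* )^n, described through their preimage in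
   (C^3 \ 0)^n: invariant under rescaling each factor, and closed in the
   (subspace) Zariski topology of (C^3 \ 0)^n. *)
Definition proj_closed (Z : ('I_n -> 'rV[C]_3) -> Prop) : Prop :=
  (forall (G : 'I_n -> 'rV[C]_3) (lam : 'I_n -> C),
      (forall i, G i != 0) -> (forall i, lam i != 0) ->
      (Z G <-> Z (fun i => lam i *: G i))) /\
  exists F : (('I_n -> 'rV[C]_3) -> C) -> Prop,
    (forall f, F f -> polyfun f) /\
    (forall G, (forall i, G i != 0) -> (Z G <-> forall f, F f -> f G = 0)).

Definition irreducible (R : ('I_n -> 'rV[C]_3) -> Prop) : Prop :=
  (exists G, R G) /\
  forall Z1 Z2, proj_closed Z1 -> proj_closed Z2 ->
    (forall G, R G -> Z1 G \/ Z2 G) ->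
    (forall G, R G -> Z1 G) \/ (forall G, R G -> Z2 G).

(* p (nonzero) lies in mult(A_t), A_t = {H_i : i <= t} (0-based indices) *)
Definition in_mult (H : 'I_n -> 'rV[C]_3) (t : 'I_n) (p : 'rV[C]_3) : Prop :=
  p != 0 /\ exists i j k : 'I_n,
    [/\ (i <= t)%N, (j <= t)%N & (k <= t)%N] /\ [/\ i != j, j != k & i != k] /\
    [/\ dot (H i) p = 0, dot (H j) p = 0 & dot (H k) p = 0].

(* |H_t ∩ mult(A_t)| <= 2, counting projective points *)
Definition meet_mult_le2 (H : 'I_n -> 'rV[C]_3) (t : 'I_n) : Prop :=
  forall p1 p2 p3 : 'rV[C]_3,
    (dot (H t) p1 = 0 /\ in_mult H t p1) ->
    (dot (H t) p2 = 0 /\ in_mult H t p2) ->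
    (dot (H t) p3 = 0 /\ in_mult H t p3) ->
    same_point p1 p2 \/ same_point p1 p3 \/ same_point p2 p3.

End Defs.

From HB Require Import structures.
From mathcomp Require Import all_boot all_order all_algebra ring.
From Stdlib Require Import Classical FunctionalExtensionality.
Set Implicit Arguments. Unset Strict Implicit. Unset Printing Implicit Defensive.
Import GRing.Theory Num.Theory.
Local Open Scope ring_scope.

(** The realization space is irreducible as soon as any two of its points [G1], [G2] are
  the values at [s = 0] and [s = 1] of a polynomial curve [s |-> g s] that lies in it for
  all but finitely many [s]: if closed sets [Z1], [Z2] cover the space while [G1] is not in
  [Z1] and [G2] is not in [Z2], the curve meets each [Zi] for finitely many [s] only, so one
  of its points in the space lies in neither.

  Such curves are built line by line. Given a curve joining the restrictions of two
  realizations [G1], [G2] to [H_0, ..., H_(t-1)], the new line must pass through the points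
  of [mult(A_t)] on [H_t], of which there are at most two. With no such point, interpolate
  [G1 t] and [G2 t] linearly; with one point [p], push the interpolation into the pencil
  through [p]; with two points, take the line joining them. Each choice is polynomial in [s],
  has the right ends after a rescaling, and satisfies the required concurrences identically,
  while all the non-incidences are open conditions that hold at [s = 0]. *)

Section Plane.
Variable C : numClosedFieldType.
Implicit Types (a b c p q u v w x y z : 'rV[C]_3) (l : C).

(** * Coordinates, dot and cross products *)

(* Coordinates are indexed by [nat] so that [ring] sees closed numerals; for [k >= 3],
   [co a k] is the junk value [co a 0]. *)
Definition co a (k : nat) : C := a 0 (inord k).
Definition mk3 (c0 c1 c2 : C) : 'rV[C]_3 := \row_(k < 3) nth c2 [:: c0; c1] k.

Lemma co_ord a (k : 'I_3) : a 0 k = co a k.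
Proof. by rewrite /co inord_val. Qed.

Lemma mk3_co0 (c0 c1 c2 : C) : co (mk3 c0 c1 c2) 0 = c0. Proof. by rewrite /co mxE inordK. Qed.
Lemma mk3_co1 (c0 c1 c2 : C) : co (mk3 c0 c1 c2) 1 = c1. Proof. by rewrite /co mxE inordK. Qed.
Lemma mk3_co2 (c0 c1 c2 : C) : co (mk3 c0 c1 c2) 2 = c2. Proof. by rewrite /co mxE inordK. Qed.
Lemma coZ l a k : co (l *: a) k = l * co a k. Proof. by rewrite /co mxE. Qed.
Lemma coD a b k : co (a + b) k = co a k + co b k. Proof. by rewrite /co mxE. Qed.
Lemma coN a k : co (- a) k = - co a k. Proof. by rewrite /co mxE. Qed.
Lemma co0 k : co 0 k = 0. Proof. by rewrite /co mxE. Qed.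
Definition coE := (coZ, coD, coN, co0, mk3_co0, mk3_co1, mk3_co2).

Lemma co3_inj a b : co a 0 = co b 0 -> co a 1 = co b 1 -> co a 2 = co b 2 -> a = b.
Proof. by move=> *; apply/rowP => -[[|[|[|k]]] hk]; rewrite !co_ord. Qed.

Lemma co3_neq0 a : a != 0 -> exists2 k, (k < 3)%N & co a k != 0.
Proof.
move=> a_neq0; have [a0|] := eqVneq (co a 0) 0; last by exists 0%N.
have [a1|] := eqVneq (co a 1) 0; last by exists 1%N.
have [a2|] := eqVneq (co a 2) 0; last by exists 2%N.
by move/eqP: a_neq0; case; apply: co3_inj; rewrite co0.
Qed.

Lemma dotE a b : dot a b = co a 0 * co b 0 + co a 1 * co b 1 + co a 2 * co b 2.
Proof. by rewrite /dot !big_ord_recr big_ord0 /= !co_ord add0r. Qed.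

Lemma det3E a b c : det3 a b c = co a 0 * (co b 1 * co c 2 - co b 2 * co c 1)
  - co a 1 * (co b 0 * co c 2 - co b 2 * co c 0) + co a 2 * (co b 0 * co c 1 - co b 1 * co c 0).
Proof.
rewrite /det3 (expand_det_row _ 0) !big_ord_recr big_ord0 /= /cofactor.
rewrite !(expand_det_row _ 0) !big_ord_recr !big_ord0 /= /cofactor !det_mx11 !mxE /=.
by rewrite !co_ord /bump /=; ring.
Qed.

Definition cross a b : 'rV[C]_3 :=
  mk3 (co a 1 * co b 2 - co a 2 * co b 1) (co a 2 * co b 0 - co a 0 * co b 2)
      (co a 0 * co b 1 - co a 1 * co b 0).

Lemma dotC a b : dot a b = dot b a. Proof. by rewrite !dotE; ring. Qed.
Lemma dotZl l a b : dot (l *: a) b = l * dot a b. Proof. by rewrite !dotE !coE; ring. Qed.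
Lemma dotZr l a b : dot a (l *: b) = l * dot a b. Proof. by rewrite !dotE !coE; ring. Qed.
Lemma det3_dot_cross a b c : det3 a b c = dot c (cross a b).
Proof. by rewrite det3E dotE /cross !coE; ring. Qed.
Lemma dot_cross_l a b : dot a (cross a b) = 0. Proof. by rewrite dotE /cross !coE; ring. Qed.
Lemma dot_cross_r a b : dot b (cross a b) = 0. Proof. by rewrite dotE /cross !coE; ring. Qed.
Lemma det3_rot a b c : det3 a b c = det3 b c a. Proof. by rewrite !det3E; ring. Qed.
Lemma det3_swap a b c : det3 a b c = - det3 a c b. Proof. by rewrite !det3E; ring. Qed.
Lemma det3_rep12 a b : det3 a a b = 0. Proof. by rewrite det3E; ring. Qed.
Lemma det3_rep23 a b : det3 a b b = 0. Proof. by rewrite det3E; ring. Qed.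
Lemma det3_rep13 a b : det3 a b a = 0. Proof. by rewrite det3E; ring. Qed.
Lemma crossC a b : cross b a = - cross a b.
Proof. by apply: co3_inj; rewrite /cross !coE; ring. Qed.
Lemma cross_scale_self l a : cross a (l *: a) = 0.
Proof. by apply: co3_inj; rewrite /cross !coE; ring. Qed.
Lemma cross0l a : cross 0 a = 0.
Proof. by apply: co3_inj; rewrite /cross !coE; ring. Qed.

Lemma cross_cross x y p : cross (cross x y) p = dot x p *: y - dot y p *: x.
Proof. by apply: co3_inj; rewrite /cross !dotE !coE; ring. Qed.

Lemma exists_dot_neq0 a : a != 0 -> exists u, dot u a != 0.
Proof.
case/co3_neq0=> -[|[|[|k]]] // _ ak.
- by exists (mk3 1 0 0); rewrite dotE !coE mul1r !mul0r !addr0.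
- by exists (mk3 0 1 0); rewrite dotE !coE mul1r !mul0r addr0 add0r.
- by exists (mk3 0 0 1); rewrite dotE !coE mul1r !mul0r !add0r.
Qed.

Lemma cross_eq0_scale a b : a != 0 -> cross a b = 0 -> exists l, b = l *: a.
Proof.
move=> /exists_dot_neq0[u ua] ab0; exists (dot b u / dot a u).
have := cross_cross a b u; rewrite ab0 cross0l => /esym/eqP; rewrite subr_eq0 => /eqP e.
by rewrite mulrC -scalerA -e scalerA mulVf ?scale1r // dotC.
Qed.

Lemma cross_orthogonal x y p : cross x y != 0 -> dot x p = 0 -> dot y p = 0 ->
  exists l, p = l *: cross x y.
Proof.
move=> xy xp yp; apply: cross_eq0_scale => //.
by rewrite cross_cross xp yp !scale0r subr0.
Qed.

Lemma cross_cross_eq0 x y z w : cross x y != 0 -> cross z w != 0 ->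
  cross (cross x y) (cross z w) = 0 <-> det3 x y z = 0 /\ det3 x y w = 0.
Proof.
move=> xy zw; rewrite !det3_dot_cross; split.
  case/(cross_eq0_scale xy) => l zwE.
  have l_neq0 : l != 0 by apply: contraNneq zw => l0; rewrite zwE l0 scale0r.
  by split; apply: (mulfI l_neq0); rewrite mulr0 -dotZr -zwE ?dot_cross_l ?dot_cross_r.
case=> xyz xyw; have [l ->] := cross_orthogonal zw xyz xyw.
by rewrite crossC cross_scale_self oppr0.
Qed.

Lemma det3_eq0P a b c : det3 a b c = 0 <->
  exists p, [/\ p != 0, dot a p = 0, dot b p = 0 & dot c p = 0].
Proof.
set M := \matrix_(r < 3, s < 3) (nth 0 [:: a; b; c] r) 0 s.
have MtE (p : 'rV[C]_3) (r : 'I_3) : (p *m M^T) 0 r = dot (nth 0 [:: a; b; c] r) p.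
  by rewrite !mxE; apply: eq_bigr => j _; rewrite !mxE mulrC.
rewrite /det3 -/M -det_tr; split.
  move/eqP/det0P => [p p_neq0 /rowP Mp]; exists p; split => //.
  - by rewrite -(MtE p 0) Mp mxE.
  - by rewrite -(MtE p 1) Mp mxE.
  - by rewrite -(MtE p 2%:R) Mp mxE.
case=> p [p_neq0 ap bp cp]; apply/eqP/det0P; exists p => //.
by apply/rowP => -[[|[|[|r]]] hr]; rewrite MtE mxE.
Qed.

Lemma det3_eq0_through x y z w v : cross x y != 0 -> cross (cross x y) (cross z w) = 0 ->
  dot v (cross x y) = 0 -> det3 z w v = 0.
Proof.
move=> xy /(cross_eq0_scale xy)[l zwE] vxy.
by rewrite det3_dot_cross zwE dotZr vxy mulr0.
Qed.

Lemma cross_same_point a b : same_point a b -> cross a b = 0.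
Proof. by case=> _ [_ [l ->]]; apply: cross_scale_self. Qed.

Lemma same_point_cross a b : a != 0 -> b != 0 -> same_point a b <-> cross a b = 0.
Proof.
move=> a_neq0 b_neq0; split; first exact: cross_same_point.
by case/(cross_eq0_scale a_neq0) => l bE; do 2!split => //; exists l.
Qed.

(** * Polynomial curves and generic properties *)

Definition poly_fun (h : C -> C) := exists q : {poly C}, h =1 horner q.

Lemma poly_fun_eq f g : f =1 g -> poly_fun f -> poly_fun g.
Proof. by move=> fg [q fq]; exists q => s; rewrite -fg. Qed.
Lemma poly_fun_cst (r : C) : poly_fun (fun _ => r).
Proof. by exists r%:P => s; rewrite hornerC. Qed.
Lemma poly_fun_id : poly_fun id.
Proof. by exists 'X => s; rewrite hornerX. Qed.
Lemma poly_funD f g : poly_fun f -> poly_fun g -> poly_fun (fun s => f s + g s).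
Proof. by move=> [p fp] [q gq]; exists (p + q) => s; rewrite hornerD fp gq. Qed.
Lemma poly_funN f : poly_fun f -> poly_fun (fun s => - f s).
Proof. by move=> [p fp]; exists (- p) => s; rewrite hornerN fp. Qed.
Lemma poly_funB f g : poly_fun f -> poly_fun g -> poly_fun (fun s => f s - g s).
Proof. by move=> pf /poly_funN; apply: poly_funD. Qed.
Lemma poly_funM f g : poly_fun f -> poly_fun g -> poly_fun (fun s => f s * g s).
Proof. by move=> [p fp] [q gq]; exists (p * q) => s; rewrite hornerM fp gq. Qed.

Lemma poly_fun_nonroot f g (r1 r2 : C) : poly_fun f -> poly_fun g ->
  f r1 != 0 -> g r2 != 0 -> exists s, f s * g s != 0.
Proof.
move=> [p fp] [q gq]; rewrite fp gq => pr1 qr2.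
have pq_neq0 : p * q != 0.
  by rewrite mulf_neq0 //; [apply: contraNneq pr1 | apply: contraNneq qr2] => ->; rewrite horner0.
apply: NNPP => no_s; move/eqP: pq_neq0; apply.
(* The naturals are pairwise distinct in [C] (characteristic 0). *)
apply: (@roots_geq_poly_eq0 _ _ [seq i%:R | i <- iota 0 (size (p * q))]).
- apply/allP => _ /mapP[i _ ->]; rewrite /root hornerM -fp -gq.
  by apply/negPn/negP => fg; apply: no_s; exists i%:R.
- by rewrite map_inj_uniq ?iota_uniq // => i j /eqP; rewrite eqr_nat => /eqP.
- by rewrite size_map size_iota.
Qed.

Definition poly_path (v : C -> 'rV[C]_3) :=
  forall k, (k < 3)%N -> poly_fun (fun s => co (v s) k).

Lemma poly_path_cst a : poly_path (fun _ => a).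
Proof. by move=> k _; apply: poly_fun_cst. Qed.

Lemma poly_path_mk3 (f0 f1 f2 : C -> C) : poly_fun f0 -> poly_fun f1 -> poly_fun f2 ->
  poly_path (fun s => mk3 (f0 s) (f1 s) (f2 s)).
Proof.
move=> p0 p1 p2 [|[|[|k]]] // _.
- by apply: poly_fun_eq p0 => s; rewrite mk3_co0.
- by apply: poly_fun_eq p1 => s; rewrite mk3_co1.
- by apply: poly_fun_eq p2 => s; rewrite mk3_co2.
Qed.

Lemma poly_pathZ (f : C -> C) (v : C -> 'rV[C]_3) :
  poly_fun f -> poly_path v -> poly_path (fun s => f s *: v s).
Proof.
by move=> pf pv k hk; apply: poly_fun_eq (poly_funM pf (pv k hk)) => s; rewrite coZ.
Qed.

Lemma poly_pathD (v w : C -> 'rV[C]_3) :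
  poly_path v -> poly_path w -> poly_path (fun s => v s + w s).
Proof.
by move=> pv pw k hk; apply: poly_fun_eq (poly_funD (pv k hk) (pw k hk)) => s; rewrite coD.
Qed.

Lemma poly_path_cross (v w : C -> 'rV[C]_3) :
  poly_path v -> poly_path w -> poly_path (fun s => cross (v s) (w s)).
Proof. by move=> pv pw; apply: poly_path_mk3; apply: poly_funB; apply: poly_funM; auto. Qed.

Lemma poly_fun_dot (v w : C -> 'rV[C]_3) :
  poly_path v -> poly_path w -> poly_fun (fun s => dot (v s) (w s)).
Proof.
move=> pv pw; apply: poly_fun_eq (fun s => esym (dotE (v s) (w s))) _.
by do 2?apply: poly_funD; apply: poly_funM; auto.
Qed.

Lemma poly_fun_det3 (u v w : C -> 'rV[C]_3) : poly_path u -> poly_path v -> poly_path w ->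
  poly_fun (fun s => det3 (u s) (v s) (w s)).
Proof.
move=> pu pv pw; apply: poly_fun_eq (fun s => esym (det3_dot_cross _ _ _)) _.
by apply: poly_fun_dot => //; apply: poly_path_cross.
Qed.

Definition interp (r0 r1 s : C) := (1 - s) * r0 + s * r1.
Definition segment a b (s : C) := (1 - s) *: a + s *: b.

Lemma interp0 r0 r1 : interp r0 r1 0 = r0.
Proof. by rewrite /interp subr0 mul1r mul0r addr0. Qed.
Lemma interp1 r0 r1 : interp r0 r1 1 = r1.
Proof. by rewrite /interp subrr mul0r add0r mul1r. Qed.
Lemma segment0 a b : segment a b 0 = a.
Proof. by rewrite /segment subr0 scale1r scale0r addr0. Qed.
Lemma segment1 a b : segment a b 1 = b.
Proof. by rewrite /segment subrr scale0r add0r scale1r. Qed.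

Lemma poly_fun_interp r0 r1 : poly_fun (interp r0 r1).
Proof.
apply: poly_funD; apply: poly_funM; do ?[apply: poly_fun_cst | apply: poly_fun_id].
by apply: poly_funB; [apply: poly_fun_cst | apply: poly_fun_id].
Qed.

Lemma poly_path_segment a b : poly_path (segment a b).
Proof.
apply: poly_pathD; apply: poly_pathZ; do ?[apply: poly_path_cst | apply: poly_fun_id].
by apply: poly_funB; [apply: poly_fun_cst | apply: poly_fun_id].
Qed.

(* Asking for [h 0 != 0] rather than [h != 0] is what the constructions below can check:
   their curves are known to behave well at [s = 0]. *)
Definition generically (P : C -> Prop) :=
  exists2 h, poly_fun h & h 0 != 0 /\ forall s, h s != 0 -> P s.

Lemma generically_all (P : C -> Prop) : (forall s, P s) -> generically P.
Proof. by move=> allP; exists (fun _ => 1); [apply: poly_fun_cst | rewrite oner_eq0]. Qed.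

Lemma generically_impl (P Q : C -> Prop) :
  (forall s, P s -> Q s) -> generically P -> generically Q.
Proof. by move=> PQ [h ph [h0 hP]]; exists h => //; split => // s /hP /PQ. Qed.

Lemma generically_and (P Q : C -> Prop) :
  generically P -> generically Q -> generically (fun s => P s /\ Q s).
Proof.
move=> [h ph [h0 hP]] [g pg [g0 gQ]]; exists (fun s => h s * g s); first exact: poly_funM.
split=> [|s]; first by rewrite mulf_neq0.
by rewrite mulf_eq0 negb_or => /andP[/hP ? /gQ ?].
Qed.

Lemma generically_forall (T : finType) (P : T -> C -> Prop) :
  (forall t, generically (P t)) -> generically (fun s => forall t, P t s).
Proof.
move=> allP; suff : generically (fun s => forall t, t \in enum T -> P t s).
  by apply: generically_impl => s Ps t; apply: Ps; rewrite mem_enum.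
elim: (enum T) => [|t ts IH]; first by apply: generically_all.
apply: generically_impl (generically_and (allP t) IH) => s [Pt Pts] u.
by rewrite in_cons => /predU1P[-> //|]; apply: Pts.
Qed.

Lemma generically_neq0 f : poly_fun f -> f 0 != 0 -> generically (fun s => f s != 0).
Proof. by move=> pf f0; exists f. Qed.

Lemma generically_path_neq0 (v : C -> 'rV[C]_3) :
  poly_path v -> v 0 != 0 -> generically (fun s => v s != 0).
Proof.
move=> pv /co3_neq0[k hk vk]; apply: generically_impl (generically_neq0 (pv k hk) vk).
by move=> s; apply: contraNneq => ->; rewrite co0.
Qed.

Section Curves.
Variable n : nat.

Definition poly_curve (g : C -> 'I_n -> 'rV[C]_3) := forall i, poly_path (fun s => g s i).

Lemma poly_fun_polyfun f (g : C -> 'I_n -> 'rV[C]_3) :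
  polyfun f -> poly_curve g -> poly_fun (fun s => f (g s)).
Proof.
move=> pf pg; elim: pf => [r|i j|f1 f2 _ p1 _ p2|f1 f2 _ p1 _ p2].
- exact: poly_fun_cst.
- by apply: poly_fun_eq (pg i j (ltn_ord j)) => s; rewrite co_ord.
- exact: poly_funD.
- exact: poly_funM.
Qed.

Lemma not_closed_witness (Z : ('I_n -> 'rV[C]_3) -> Prop) G : proj_closed Z ->
  (forall i, G i != 0) -> ~ Z G ->
  exists2 f, polyfun f & f G != 0 /\ forall G', (forall i, G' i != 0) -> Z G' -> f G' = 0.
Proof.
move=> [_ [F [Fpoly ZE]]] G_neq0 nZG.
have [f Ff fG] : exists2 f, F f & f G != 0.
  apply: NNPP => no_f; apply/nZG/(ZE _ G_neq0) => f Ff.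
  by apply: NNPP => /eqP fG; apply: no_f; exists f.
by exists f; [apply: Fpoly | split=> // G' G'_neq0 /(ZE _ G'_neq0); apply].
Qed.

Lemma irreducible_of_curves (R : ('I_n -> 'rV[C]_3) -> Prop) :
  (exists G, R G) -> (forall G, R G -> forall i, G i != 0) ->
  (forall G1 G2, R G1 -> R G2 -> exists g,
     [/\ poly_curve g, g 0 = G1, g 1 = G2 & generically (fun s => R (g s))]) ->
  irreducible R.
Proof.
move=> R_ne R_neq0 R_curves; split => // Z1 Z2 cl1 cl2 cover.
have [|] := classic (forall G, R G -> Z1 G); first by left.
move=> /not_all_ex_not[G1 /(imply_to_and (R G1))[RG1 nZ1]].
have [|] := classic (forall G, R G -> Z2 G); first by right.
move=> /not_all_ex_not[G2 /(imply_to_and (R G2))[RG2 nZ2]].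
have [f1 pf1 [f1G1 Z1f1]] := not_closed_witness cl1 (R_neq0 _ RG1) nZ1.
have [f2 pf2 [f2G2 Z2f2]] := not_closed_witness cl2 (R_neq0 _ RG2) nZ2.
have [g [pg g0 g1 [h ph [h0 Rg]]]] := R_curves _ _ RG1 RG2.
rewrite -g0 in f1G1; rewrite -g1 in f2G2.
have pf1g := poly_fun_polyfun pf1 pg; have pf2g := poly_fun_polyfun pf2 pg.
have [s1 hf1s1] := poly_fun_nonroot ph pf1g h0 f1G1.
have [s] := poly_fun_nonroot (poly_funM ph pf1g) pf2g hf1s1 f2G2.
rewrite !mulf_eq0 !negb_or => /andP[/andP[hs f1s] f2s].
have Rgs := Rg s hs; have gs_neq0 := R_neq0 _ Rgs.
case: (cover _ Rgs) => [/(Z1f1 _ gs_neq0)|/(Z2f2 _ gs_neq0)] /eqP.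
- by rewrite (negPf f1s).
- by rewrite (negPf f2s).
Qed.

Lemma incidence_det3 (G : 'I_n -> 'rV[C]_3) (i j k : 'I_n) : i != j -> j != k -> i != k ->
  incidence G [set i; j; k] <-> det3 (G i) (G j) (G k) = 0.
Proof.
move=> ij jk ik; rewrite det3_eq0P; split.
  by case=> _ [p [p_neq0 Gp]]; exists p; split; rewrite // Gp // !inE eqxx ?orbT.
case=> p [p_neq0 ip jp kp]; split.
  by rewrite -setUA !cardsU1 cards1 !inE (negPf ij) (negPf ik) (negPf jk).
by exists p; split => // x; rewrite !inE => /orP[/orP[]|] /eqP->.
Qed.

End Curves.

(** * Realizations of the arrangement *)

Section Arrangement.
Variables (n : nat) (H : 'I_n -> 'rV[C]_3).
Hypothesis H_neq0 : forall i, H i != 0.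
Hypothesis H_distinct : forall i j, i != j -> ~ same_point (H i) (H j).
Hypothesis H_mult : forall t, meet_mult_le2 H t.

(* Realizations of [I(A)] restricted to the first [m] lines; [cross (X i) (X j) != 0]
   says that [X i] and [X j] are distinct points of the dual plane. *)
Definition realizes_upto (m : nat) (X : 'I_n -> 'rV[C]_3) : Prop :=
  [/\ forall i : 'I_n, (i < m)%N -> X i != 0,
      forall i j : 'I_n, (i < m)%N -> (j < m)%N -> i != j -> cross (X i) (X j) != 0 &
      forall i j k : 'I_n, (i < m)%N -> (j < m)%N -> (k < m)%N ->
        (det3 (X i) (X j) (X k) == 0) = (det3 (H i) (H j) (H k) == 0)].

Lemma cross_H_neq0 i j : i != j -> cross (H i) (H j) != 0.
Proof.
by move=> ij; apply/eqP => /(same_point_cross (H_neq0 i) (H_neq0 j)); apply: H_distinct.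
Qed.

Lemma realizes_upto_H m : realizes_upto m H.
Proof. by split=> // i j _ _; apply: cross_H_neq0. Qed.

Lemma realizationE X : realization (incidence H) X <-> realizes_upto n X.
Proof.
split.
  case=> X_neq0 [X_dist X_inc]; split=> [i _|i j _ _ ij|i j k _ _ _]; first exact: X_neq0.
    by apply/eqP => /(same_point_cross (X_neq0 i) (X_neq0 j)); apply: X_dist.
  have [->|ij] := eqVneq i j; first by rewrite !det3_rep12 eqxx.
  have [->|jk] := eqVneq j k; first by rewrite !det3_rep23 eqxx.
  have [->|ik] := eqVneq i k; first by rewrite !det3_rep13 eqxx.
  by apply/eqP/eqP; rewrite X_inc // incidence_det3.
case=> X_lt_neq0 X_cross X_det.
have X_neq0 i : X i != 0 := X_lt_neq0 i (ltn_ord i).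
split=> //; split.
  by move=> i j ij /(same_point_cross (X_neq0 i) (X_neq0 j)) /eqP; apply/negP/X_cross.
by move=> i j k ij jk ik; rewrite incidence_det3 // !(rwP eqP) X_det.
Qed.

Lemma realizes_upto_cross_cross m X (a b c d : 'I_n) : realizes_upto m X ->
  (a < m)%N -> (b < m)%N -> (c < m)%N -> (d < m)%N -> a != b -> c != d ->
  cross (cross (X a) (X b)) (cross (X c) (X d)) = 0 <->
  cross (cross (H a) (H b)) (cross (H c) (H d)) = 0.
Proof.
move=> [_ X_cross X_det] ha hb hc hd ab cd.
rewrite (cross_cross_eq0 (X_cross _ _ ha hb ab) (X_cross _ _ hc hd cd)).
by rewrite (cross_cross_eq0 (cross_H_neq0 ab) (cross_H_neq0 cd)) !(rwP eqP) !X_det.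
Qed.

Lemma ltnS_ord (t i : 'I_n) : (i < t.+1)%N -> (i < t)%N \/ i = t.
Proof. by rewrite ltnS leq_eqVlt => /orP[/eqP/val_inj|]; [right|left]. Qed.

Definition extend (m : nat) (X : 'I_n -> 'rV[C]_3) w : 'I_n -> 'rV[C]_3 :=
  fun i => if (i < m)%N then X i else w.

Lemma realizes_upto_extend (t : 'I_n) X w : realizes_upto t X -> w != 0 ->
  (forall i : 'I_n, (i < t)%N -> cross (X i) w != 0) ->
  (forall i j : 'I_n, (i < t)%N -> (j < t)%N ->
     (det3 (X i) (X j) w == 0) = (det3 (H i) (H j) (H t) == 0)) ->
  realizes_upto t.+1 (extend t X w).
Proof.
move=> [X_neq0 X_cross X_det] w_neq0 Xw_cross Xw_det.
have extE (i : 'I_n) : (i < t)%N -> extend t X w i = X i by rewrite /extend => ->.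
have extt : extend t X w t = w by rewrite /extend ltnn.
split.
- by move=> i /ltnS_ord[hi|->]; [rewrite extE ?X_neq0 | rewrite extt].
- move=> i j /ltnS_ord[hi|->] /ltnS_ord[hj|->] ij.
  + by rewrite !extE ?X_cross.
  + by rewrite extt extE ?Xw_cross.
  + by rewrite extt extE // crossC oppr_eq0 Xw_cross.
  + by rewrite eqxx in ij.
- move=> i j k /ltnS_ord[hi|->] /ltnS_ord[hj|->] /ltnS_ord[hk|->].
  + by rewrite !extE ?X_det.
  + by rewrite extt !extE ?Xw_det.
  + by rewrite extt !extE // det3_swap oppr_eq0 Xw_det // [det3 (H i) _ _]det3_swap oppr_eq0.
  + by rewrite !det3_rep23 eqxx.
  + by rewrite extt !extE // det3_rot [det3 (H t) _ _]det3_rot Xw_det.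
  + by rewrite !det3_rep13 eqxx.
  + by rewrite !det3_rep12 eqxx.
  + by rewrite !det3_rep12 eqxx.
Qed.

Lemma mult_point_cross (t x y : 'I_n) : (x < t)%N -> (y < t)%N -> x != y ->
  det3 (H x) (H y) (H t) = 0 ->
  dot (H t) (cross (H x) (H y)) = 0 /\ in_mult H t (cross (H x) (H y)).
Proof.
move=> hx hy xy xyt; rewrite -det3_dot_cross; split => //; split; first exact: cross_H_neq0.
exists x, y, t; split; first by split; rewrite // ltnW.
split.
  by split=> //; [apply: contraTneq hy | apply: contraTneq hx] => ->; rewrite ltnn.
by split; rewrite ?dot_cross_l ?dot_cross_r -?det3_dot_cross.
Qed.

Section Joining.
Variables G1 G2 : 'I_n -> 'rV[C]_3.
Hypotheses (G1_real : realizes_upto n G1) (G2_real : realizes_upto n G2).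

Definition joined_upto (m : nat) := exists g, [/\ poly_curve g,
  forall i : 'I_n, (i < m)%N -> g 0 i = G1 i /\ g 1 i = G2 i &
  generically (fun s => realizes_upto m (g s))].

(* The non-incidences are open conditions that hold at [s = 0], where the curve is [G1];
   only the concurrences forced by [I(A)] have to be checked for every [s]. *)
Lemma joined_upto_extend (t : 'I_n) g (w : C -> 'rV[C]_3) :
  poly_curve g -> (forall i : 'I_n, (i < t)%N -> g 0 i = G1 i /\ g 1 i = G2 i) ->
  generically (fun s => realizes_upto t (g s)) ->
  poly_path w -> w 0 = G1 t -> w 1 = G2 t ->
  (forall s, realizes_upto t (g s) -> forall i j : 'I_n, (i < t)%N -> (j < t)%N ->
     det3 (H i) (H j) (H t) = 0 -> det3 (g s i) (g s j) (w s) = 0) ->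
  joined_upto t.+1.
Proof.
move=> pg g_ends g_real pw w0 w1 w_incid.
case: G1_real => G1_neq0 G1_cross G1_det.
exists (fun s => extend t (g s) (w s)); split.
- by move=> i; rewrite /extend; case: (i < t)%N; [apply: pg | apply: pw].
- by move=> i /ltnS_ord[hi|->]; rewrite /extend ?hi ?ltnn ?w0 ?w1 //; apply: g_ends.
have gen_w : generically (fun s => w s != 0).
  by apply: generically_path_neq0; rewrite // w0 G1_neq0.
have gen_cross : generically (fun s => forall i : 'I_n, (i < t)%N -> cross (g s i) (w s) != 0).
  apply: generically_forall => i; have [hi|_] := ltnP i t; last exact: generically_all.
  apply: generically_impl (generically_path_neq0 (poly_path_cross (pg i) pw) _) => [s ? _ //|].
  have [-> _] := g_ends i hi; rewrite w0 G1_cross //.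
  by apply: contraTneq hi => ->; rewrite ltnn.
have gen_det : generically (fun s => forall i j : 'I_n, (i < t)%N -> (j < t)%N ->
    det3 (H i) (H j) (H t) != 0 -> det3 (g s i) (g s j) (w s) != 0).
  apply: generically_forall => i; apply: generically_forall => j.
  have [/and3P[hi hj hd]|] := boolP [&& (i < t)%N, (j < t)%N & det3 (H i) (H j) (H t) != 0].
    have pdet := poly_fun_det3 (pg i) (pg j) pw.
    apply: generically_impl (generically_neq0 pdet _) => [s ? _ _ _ //|].
    by have [-> _] := g_ends i hi; have [-> _] := g_ends j hj; rewrite w0 G1_det.
  by move=> nh; apply: generically_all => s hi hj hd; move: nh; rewrite hi hj hd.
have := generically_and g_real (generically_and gen_w (generically_and gen_cross gen_det)).
apply: generically_impl.
move=> s [gs_real [ws_neq0 [ws_cross ws_det]]]; apply: realizes_upto_extend => // i j hi hj.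
have [hd|hd] := eqVneq (det3 (H i) (H j) (H t)) 0; first by rewrite w_incid // eqxx.
exact/negbTE/ws_det.
Qed.

Lemma joined_step_general (t : 'I_n) :
  (forall a b : 'I_n, (a < t)%N -> (b < t)%N -> a != b -> det3 (H a) (H b) (H t) != 0) ->
  joined_upto t -> joined_upto t.+1.
Proof.
move=> general [g [pg g_ends g_real]].
apply: (joined_upto_extend pg g_ends g_real (poly_path_segment _ _) (segment0 _ _) (segment1 _ _)).
move=> s _ i j hi hj hd; have [->|ij] := eqVneq i j; first exact: det3_rep12.
by move: (general i j hi hj ij); rewrite hd eqxx.
Qed.

Lemma joined_step_one_point (t a b : 'I_n) :
  (a < t)%N -> (b < t)%N -> a != b -> det3 (H a) (H b) (H t) = 0 ->
  (forall c d : 'I_n, (c < t)%N -> (d < t)%N -> c != d -> det3 (H c) (H d) (H t) = 0 ->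
     cross (cross (H a) (H b)) (cross (H c) (H d)) = 0) ->
  joined_upto t -> joined_upto t.+1.
Proof.
move=> ha hb ab abt through_p [g [pg g_ends g_real]].
have [a0 a1] := g_ends a ha; have [b0 b1] := g_ends b hb.
pose p s := cross (g s a) (g s b).
have p_end G : realizes_upto n G -> cross (G a) (G b) != 0 /\ dot (G t) (cross (G a) (G b)) = 0.
  case=> _ G_cross G_det; rewrite -det3_dot_cross G_cross //; split=> //.
  by apply/eqP; rewrite G_det // abt.
have [p0_neq0 G1t_p0] := p_end _ G1_real; have [p1_neq0 G2t_p1] := p_end _ G2_real.
have [u0 u0p] := exists_dot_neq0 p0_neq0; have [u1 u1p] := exists_dot_neq0 p1_neq0.
(* [w' s] joins [p s] to the intersection point of the lines [segment u0 u1 s] and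
   [segment (G1 t) (G2 t) s]; by Grassmann's identity it is a multiple of [G1 t] at [s = 0]
   (resp. [G2 t] at [s = 1]) because that line passes through [p]. *)
pose w' s := cross (cross (segment u0 u1 s) (segment (G1 t) (G2 t) s)) (p s).
have w'0 : w' 0 = dot u0 (p 0) *: G1 t.
  by rewrite /w' !segment0 cross_cross {2}/p a0 b0 G1t_p0 scale0r subr0.
have w'1 : w' 1 = dot u1 (p 1) *: G2 t.
  by rewrite /w' !segment1 cross_cross {2}/p a1 b1 G2t_p1 scale0r subr0.
pose w s := interp (dot u0 (p 0))^-1 (dot u1 (p 1))^-1 s *: w' s.
apply: (joined_upto_extend (w := w) pg g_ends g_real).
- apply: poly_pathZ; first exact: poly_fun_interp.
  by do 2!apply: poly_path_cross; first [exact: poly_path_segment | exact: pg].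
- by rewrite /w interp0 w'0 scalerA mulVf ?scale1r // /p a0 b0.
- by rewrite /w interp1 w'1 scalerA mulVf ?scale1r // /p a1 b1.
move=> s gs_real i j hi hj ijt; have [->|ij] := eqVneq i j; first exact: det3_rep12.
have [_ gs_cross _] := gs_real.
apply: (det3_eq0_through (gs_cross _ _ ha hb ab)).
  by apply/(realizes_upto_cross_cross gs_real) => //; apply: through_p.
by rewrite /w /w' /p dotZl [dot (cross _ _) (cross _ _)]dotC dot_cross_r mulr0.
Qed.

(* The new line is the join of [p] and [q]; by [H_mult] every other concurrence with
   [H t] takes place at [p] or at [q], hence holds identically along the curve. *)
Lemma joined_step_two_points (t a b c d : 'I_n) :
  (a < t)%N -> (b < t)%N -> a != b -> det3 (H a) (H b) (H t) = 0 ->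
  (c < t)%N -> (d < t)%N -> c != d -> det3 (H c) (H d) (H t) = 0 ->
  cross (cross (H a) (H b)) (cross (H c) (H d)) != 0 ->
  joined_upto t -> joined_upto t.+1.
Proof.
move=> ha hb ab abt hc hd cd cdt pq_neq0 [g [pg g_ends g_real]].
have [a0 a1] := g_ends a ha; have [b0 b1] := g_ends b hb.
have [c0 c1] := g_ends c hc; have [d0 d1] := g_ends d hd.
pose p s := cross (g s a) (g s b); pose q s := cross (g s c) (g s d).
have G_pq G : realizes_upto n G ->
    exists l, G t = l *: cross (cross (G a) (G b)) (cross (G c) (G d)).
  move=> G_real; have [_ _ G_det] := G_real.
  apply: cross_orthogonal.
  - apply/eqP => /(realizes_upto_cross_cross G_real) pq.
    by rewrite pq ?eqxx in pq_neq0.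
  - by rewrite dotC -det3_dot_cross; apply/eqP; rewrite G_det // abt.
  - by rewrite dotC -det3_dot_cross; apply/eqP; rewrite G_det // cdt.
have [l0 G1tE] := G_pq _ G1_real; have [l1 G2tE] := G_pq _ G2_real.
pose w s := interp l0 l1 s *: cross (p s) (q s).
apply: (joined_upto_extend (w := w) pg g_ends g_real).
- by apply: poly_pathZ; [apply: poly_fun_interp | do 2!apply: poly_path_cross; apply: pg].
- by rewrite /w interp0 /p /q a0 b0 c0 d0 G1tE.
- by rewrite /w interp1 /p /q a1 b1 c1 d1 G2tE.
move=> s gs_real i j hi hj ijt; have [->|ij] := eqVneq i j; first exact: det3_rep12.
have [_ gs_cross _] := gs_real.
have [Ht_p p_mult] := mult_point_cross ha hb ab abt.
have [Ht_q q_mult] := mult_point_cross hc hd cd cdt.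
have [Ht_ij ij_mult] := mult_point_cross hi hj ij ijt.
have [/cross_same_point pq|[/cross_same_point p_ij|/cross_same_point q_ij]] :=
  H_mult (conj Ht_p p_mult) (conj Ht_q q_mult) (conj Ht_ij ij_mult).
- by rewrite pq eqxx in pq_neq0.
- apply: (det3_eq0_through (gs_cross _ _ ha hb ab)).
    exact/(realizes_upto_cross_cross gs_real).
  by rewrite /w /p dotZl [dot (cross _ _) _]dotC dot_cross_l mulr0.
- apply: (det3_eq0_through (gs_cross _ _ hc hd cd)).
    exact/(realizes_upto_cross_cross gs_real).
  by rewrite /w /q dotZl [dot (cross _ _) _]dotC dot_cross_r mulr0.
Qed.

Lemma joined_upto_le m : (m <= n)%N -> joined_upto m.
Proof.
elim: m => [_|m IH m_lt_n].
  exists (fun _ _ => 0); split=> //; first by move=> i; apply: poly_path_cst.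
  by apply: generically_all.
pose t := Ordinal m_lt_n; have IHt : joined_upto t := IH (ltnW m_lt_n).
pose on_t (a b : 'I_n) := [/\ (a < t)%N, (b < t)%N, a != b & det3 (H a) (H b) (H t) = 0].
have [[a [b [ha hb ab abt]]]|no_point] := classic (exists a b : 'I_n, on_t a b); last first.
  apply: (joined_step_general _ IHt) => a b ha hb ab; apply/eqP => abt.
  by apply: no_point; exists a, b.
have [[c [d [[hc hd cd cdt] pq]]]|one_point] :=
  classic (exists c d : 'I_n, on_t c d /\ cross (cross (H a) (H b)) (cross (H c) (H d)) != 0).
  exact: joined_step_two_points ha hb ab abt hc hd cd cdt pq IHt.
apply: (joined_step_one_point ha hb ab abt _ IHt) => c d hc hd cd cdt.
apply/eqP; apply: contraT => pq; case: one_point.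
by exists c, d; split; first split.
Qed.

End Joining.

Lemma realizations_joined G1 G2 :
  realization (incidence H) G1 -> realization (incidence H) G2 -> exists g,
  [/\ poly_curve g, g 0 = G1, g 1 = G2 & generically (fun s => realization (incidence H) (g s))].
Proof.
move=> /realizationE G1_real /realizationE G2_real.
have [g [pg g_ends g_real]] := joined_upto_le G1_real G2_real (leqnn n).
exists g; split=> //.
- by apply: functional_extensionality => i; have [] := g_ends i (ltn_ord i).
- by apply: functional_extensionality => i; have [] := g_ends i (ltn_ord i).
- by apply: generically_impl g_real => s /realizationE.
Qed.

End Arrangement.
End Plane.

Theorem mainTheorem2 (C : numClosedFieldType) (n : nat) (H : 'I_n -> 'rV[C]_3)
  (H_nz : forall i, H i != 0)
  (H_distinct : forall i j, i != j -> ~ same_point (H i) (H j))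
  (H_mult : forall t : 'I_n, meet_mult_le2 H t) :
  @irreducible C n (realization (incidence H)).
Proof.
apply: irreducible_of_curves.
- by exists H; apply/realizationE/realizes_upto_H.
- by move=> G /realizationE[G_neq0 _ _] i; apply: G_neq0.
- exact: realizations_joined.
Qed.
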